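(* Suppose $\mathds{G}$ is an element-based (respectively set-based) generator that generates in the limit from every countable collection under enumerations without noise or omissions. Let $\mathcal{L}$ be a countable collection and let $\tilde{\mathcal{L}}=\{L\cup A\setminus B: L\in\mathcal{L},\ A\subseteq U\setminus L,\ B\subseteq L,\ |A|<\infty,\ |B|<\infty\}$. Suppose $x_{1:\infty}$ is an enumeration of some target language $K\in\mathcal{L}$ with finite noise and finite omissions. Then $\mathds{G}$ applied to the collection $\tilde{\mathcal{L}}$ generates from $K$ in the limit under the enumeration $x_{1:\infty}$.
   Context: The universe $U=\mathbb{N}$ is countable; a language is an infinite subset of $U$; a collection is a countable family of languages (note $\tilde{\mathcal{L}}$ is countable). An enumeration of $L$ without noise or omissions lists every element of $L$ exactly once and nothing else. An enumeration of $K$ with finite noise and finite omissions is a sequence of distinct elements listing every element of some $\hat K\subseteq K$ with $|K\setminus\hat K|<\infty$ together with only finitely many elements outside $\hat K$. An element-based generator outputs at step $n$ an element $w_n\notin\{x_1,\dots,x_n,w_1,\dots,w_{n-1}\}$; a set-based generator outputs $A_n\subseteq U\setminus\{x_1,\dots,x_n\}$. Generating in the limit from a language $T$ means $w_n\in T$ (resp. $A_n\subseteq T$) for all sufficiently large $n$; generating in the limit from a collection under a class of enumerations means doing so for every member $T$ of the collection and every enumeration of $T$ in the class. *)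

(* Universe U = nat; sets/languages are predicates nat -> Prop. *)
From Stdlib Require Import List Arith.
Import ListNotations.

Definition lang := nat -> Prop.

(* A countable collection: a nat-indexed family of languages. *)
Definition coll := nat -> lang.

Definition infinite_set (S : lang) : Prop := forall m, exists n, m <= n /\ S n.
Definition finite_set (S : lang) : Prop := exists l : list nat, forall w, S w -> In w l.

(* Every member of the collection is a language (an infinite subset of U). *)
Definition is_collection (C : coll) : Prop := forall i, infinite_set (C i).

(* Input streams are x : nat -> nat, with x 0 = x_1, x 1 = x_2, ...
   prefix x n = [x_1; ...; x_n]. *)
Definition prefix (x : nat -> nat) (n : nat) : list nat := map x (seq 0 n).

Definition enum_exact (x : nat -> nat) (L : lang) : Prop :=
  (forall m n, x m = x n -> m = n) /\ (forall w, L w <-> exists n, x n = w).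

Definition enum_noisy (x : nat -> nat) (K : lang) : Prop :=
  (forall m n, x m = x n -> m = n) /\
  exists Khat : lang,
    (forall w, Khat w -> K w) /\
    finite_set (fun w => K w /\ ~ Khat w) /\
    (forall w, Khat w -> exists n, x n = w) /\
    finite_set (fun w => (exists n, x n = w) /\ ~ Khat w).

Definition is_tilde (C Ct : coll) : Prop :=
  (forall j, exists i (A B : lang),
      (forall w, A w -> ~ C i w) /\ (forall w, B w -> C i w) /\
      finite_set A /\ finite_set B /\
      (forall w, Ct j w <-> ((C i w \/ A w) /\ ~ B w))) /\
  (forall i (A B : lang),
      (forall w, A w -> ~ C i w) -> (forall w, B w -> C i w) ->
      finite_set A -> finite_set B ->
      exists j, forall w, Ct j w <-> ((C i w \/ A w) /\ ~ B w)).

(* Element-based generator: given the collection and x_1..x_n, outputs w_n. *)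
Definition egen := coll -> list nat -> nat.

Definition egen_valid (G : egen) : Prop :=
  forall (C : coll) (x : nat -> nat) (n : nat), 1 <= n ->
    ~ In (G C (prefix x n)) (prefix x n) /\
    (forall k, 1 <= k < n -> G C (prefix x n) <> G C (prefix x k)).

Definition egenerates (G : egen) (C : coll) (x : nat -> nat) (T : lang) : Prop :=
  exists N, forall n, N <= n -> 1 <= n -> T (G C (prefix x n)).

(* Set-based generator: outputs A_n ⊆ U \ {x_1..x_n}. *)
Definition sgen := coll -> list nat -> lang.

Definition sgen_valid (G : sgen) : Prop :=
  forall (C : coll) (x : nat -> nat) (n : nat) (w : nat), 1 <= n ->
    G C (prefix x n) w -> ~ In w (prefix x n).

Definition sgenerates (G : sgen) (C : coll) (x : nat -> nat) (T : lang) : Prop :=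
  exists N, forall n, N <= n -> 1 <= n -> forall w, G C (prefix x n) w -> T w.

(* The set actually listed by a noisy enumeration x of K differs from K by
   finitely many noise elements added and finitely many omissions removed, so
   it is a member of the enlarged collection, and x enumerates it exactly.
   Hence G run on the enlarged collection eventually outputs only unlisted
   elements of range x; once the finitely many noise elements have all been
   listed, such elements lie in K. *)
From Stdlib Require Import List Lia Classical.

Definition range (x : nat -> nat) : lang := fun w => exists n, x n = w.

Lemma finite_set_sub (A B : lang) :
  (forall w, A w -> B w) -> finite_set B -> finite_set A.
Proof.
  intros HAB [l Hl]. exists l. intros w Hw. apply Hl, HAB, Hw.
Qed.

Lemma finite_set_bounded (A : lang) :
  finite_set A -> exists M, forall w, A w -> w < M.
Proof.
  intros [l Hl].
  assert (Hbound : exists M, forall w, In w l -> w < M).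
  { clear Hl. induction l as [|a l [M HM]].
    - exists 0. intros w [].
    - exists (S (max a M)). intros w [<-|Hw].
      + lia.
      + specialize (HM w Hw). lia. }
  destruct Hbound as [M HM]. exists M. intros w Hw. apply HM, Hl, Hw.
Qed.

Lemma infinite_set_diff_finite (L B : lang) :
  infinite_set L -> finite_set B -> infinite_set (fun w => L w /\ ~ B w).
Proof.
  intros HL HB m. destruct (finite_set_bounded B HB) as [M HM].
  destruct (HL (max m M)) as [n [Hn HLn]]. exists n. split; [lia|].
  split; [exact HLn|]. intros HBn. specialize (HM n HBn). lia.
Qed.

Lemma is_tilde_collection (C Ct : coll) :
  is_collection C -> is_tilde C Ct -> is_collection Ct.
Proof.
  intros HC [Hmem _] j m.
  destruct (Hmem j) as [i [A [B [_ [_ [_ [HB HCt]]]]]]].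
  destruct (infinite_set_diff_finite (C i) B (HC i) HB m) as [n [Hn [HCn HBn]]].
  exists n. split; [exact Hn|]. apply HCt. auto.
Qed.

Section NoisyEnumeration.

Variables (x : nat -> nat) (K : lang).
Hypothesis Hx : enum_noisy x K.

Lemma enum_noisy_noise_finite : finite_set (fun w => range x w /\ ~ K w).
Proof.
  destruct Hx as [_ [Kh [HKhK [_ [_ Hnoise]]]]].
  apply (finite_set_sub _ _) with (2 := Hnoise).
  intros w [Hr HnK]. split; [exact Hr|]. intros HKh. apply HnK, HKhK, HKh.
Qed.

Lemma enum_noisy_omissions_finite : finite_set (fun w => K w /\ ~ range x w).
Proof.
  destruct Hx as [_ [Kh [_ [Homit [HKhx _]]]]].
  apply (finite_set_sub _ _) with (2 := Homit).
  intros w [HK Hnr]. split; [exact HK|]. intros HKh. apply Hnr, HKhx, HKh.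
Qed.

End NoisyEnumeration.

Lemma enum_noisy_range_in_tilde (x : nat -> nat) (C Ct : coll) (i : nat) :
  enum_noisy x (C i) -> is_tilde C Ct -> exists j, enum_exact x (Ct j).
Proof.
  intros Hx [_ Hclosed].
  destruct (Hclosed i (fun w => range x w /\ ~ C i w) (fun w => C i w /\ ~ range x w))
    as [j Hj].
  - intros w [_ Hw]. exact Hw.
  - intros w [Hw _]. exact Hw.
  - exact (enum_noisy_noise_finite x (C i) Hx).
  - exact (enum_noisy_omissions_finite x (C i) Hx).
  - exists j. split; [exact (proj1 Hx)|]. intros w. rewrite Hj. split.
    + intros [[HC|[Hr _]] Hnot]; [|exact Hr].
      apply NNPP. intros Hr. apply Hnot. split; assumption.
    + intros Hr. split.
      * destruct (classic (C i w)); [left | right]; auto.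
      * intros [_ Hnr]. contradiction.
Qed.

Lemma in_prefix (x : nat -> nat) (k n : nat) : k < n -> In (x k) (prefix x n).
Proof.
  intros Hk. apply in_map_iff. exists k. split; [reflexivity|]. apply in_seq. lia.
Qed.

Lemma prefix_eventually_contains (x : nat -> nat) (l : list nat) :
  exists N, forall n, N <= n -> forall w, In w l -> range x w -> In w (prefix x n).
Proof.
  induction l as [|a l [N HN]].
  - exists 0. intros n _ w [].
  - destruct (classic (range x a)) as [[k Hk]|Ha].
    + exists (max N (S k)). intros n Hn w [<-|Hw] Hr.
      * rewrite <- Hk. apply in_prefix. lia.
      * apply HN; [lia | exact Hw | exact Hr].
    + exists N. intros n Hn w [<-|Hw] Hr; [contradiction|]. apply HN; assumption.
Qed.

Lemma enum_noisy_unlisted_in_target (x : nat -> nat) (K T : lang) :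
  enum_noisy x K -> enum_exact x T ->
  exists N, forall n, N <= n -> forall w, T w -> ~ In w (prefix x n) -> K w.
Proof.
  intros Hx [_ HT]. destruct (enum_noisy_noise_finite x K Hx) as [l Hl].
  destruct (prefix_eventually_contains x l) as [N HN].
  exists N. intros n Hn w Hw Hnew. apply HT in Hw.
  apply NNPP. intros HK. apply Hnew, (HN n Hn w); [apply Hl; split|]; assumption.
Qed.

Theorem lemma4p3 :
  (forall G : egen, egen_valid G ->
     (forall C : coll, is_collection C ->
        forall i x, enum_exact x (C i) -> egenerates G C x (C i)) ->
     forall (C Ct : coll) (i : nat) (x : nat -> nat),
       is_collection C -> is_tilde C Ct -> enum_noisy x (C i) ->
       egenerates G Ct x (C i))
  /\
  (forall G : sgen, sgen_valid G ->
     (forall C : coll, is_collection C ->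
        forall i x, enum_exact x (C i) -> sgenerates G C x (C i)) ->
     forall (C Ct : coll) (i : nat) (x : nat -> nat),
       is_collection C -> is_tilde C Ct -> enum_noisy x (C i) ->
       sgenerates G Ct x (C i)).
Proof.
  split; intros G HG Hgen C Ct i x HC Ht Hx;
    destruct (enum_noisy_range_in_tilde x C Ct i Hx Ht) as [j Hj];
    destruct (enum_noisy_unlisted_in_target x (C i) (Ct j) Hx Hj) as [N HN];
    destruct (Hgen Ct (is_tilde_collection C Ct HC Ht) j x Hj) as [N' HN'];
    exists (max N N').
  - intros n Hn Hn1. apply (HN n); [lia | apply HN'; lia |].
    apply (HG Ct x n Hn1).
  - intros n Hn Hn1 w Hw. apply (HN n); [lia | apply (HN' n); [lia | lia | exact Hw] |].
    exact (HG Ct x n w Hn1 Hw).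
Qed.
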